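(* Let $m\ge2$, $k\ge2$, $n\ge1$, $\mathcal{A}=(a_{i_1i_2\cdots i_m})\in\mathbb{C}^{[m,n]}$ and $\mathcal{B}=(b_{i_1i_2\cdots i_k})\in\mathbb{C}^{[k,n]}$. For $i\in[n]$ let $c_{i\cdots i}=\sum_{i_2,\ldots,i_m=1}^n a_{ii_2\cdots i_m}b_{i_2i\cdots i}\cdots b_{i_mi\cdots i}$ (the diagonal entries of $\mathcal{A}\mathcal{B}$). Then \[\sigma(\mathcal{A}\mathcal{B})\subseteq\mathbf{G}=\bigcup_{i\in[n]}\{z\in\mathbb{C}:|z-c_{i\cdots i}|\le r_i(\mathcal{A})(R(\mathcal{B}))^{m-1}-|c_{i\cdots i}|\}.\]
   Context: $[n]=\{1,\ldots,n\}$. $\mathbb{C}^{[m,n]}$ denotes the set of order $m$, dimension $n$ complex tensors. For a tensor $\mathcal{T}=(t_{i_1\cdots i_p})$ of order $p$ and dimension $n$: $r_i(\mathcal{T})=\sum_{i_2,\ldots,i_p=1}^n|t_{ii_2\cdots i_p}|$, $R(\mathcal{T})=\max_{i\in[n]}r_i(\mathcal{T})$. General product: $\mathcal{A}\mathcal{B}=(c_{i\alpha_1\cdots\alpha_{m-1}})$ is the order $(m-1)(k-1)+1$, dimension $n$ tensor with $c_{i\alpha_1\cdots\alpha_{m-1}}=\sum_{i_2,\ldots,i_m=1}^n a_{ii_2\cdots i_m}b_{i_2\alpha_1}\cdots b_{i_m\alpha_{m-1}}$, $i\in[n]$, $\alpha_j\in[n]^{k-1}$ (where $b_{j\alpha}$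 with $\alpha=(j_2,\ldots,j_k)$ means $b_{jj_2\cdots j_k}$). Eigenvalues of a tensor $\mathcal{T}$ of order $p\ge2$: $\lambda\in\mathbb{C}$ such that there is a nonzero $x\in\mathbb{C}^n$ with $\sum_{i_2,\ldots,i_p=1}^n t_{ii_2\cdots i_p}x_{i_2}\cdots x_{i_p}=\lambda x_i^{p-1}$ for all $i\in[n]$; $\sigma(\mathcal{T})$ is the set of eigenvalues of $\mathcal{T}$. *)

From HB Require Import structures.
From mathcomp Require Import all_boot all_order all_algebra.
Set Implicit Arguments. Unset Strict Implicit. Unset Printing Implicit Defensive.
Import Order.TTheory GRing.Theory Num.Theory.
Local Open Scope ring_scope.

(* A tensor of order p and dimension n with entries in C.  An entry
   t_{i i_2 ... i_p} is  T i a  where a : {ffun 'I_p.-1 -> 'I_n} is the tail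
   index (i_2,...,i_p), i.e. a j = i_{j+2}. *)
Definition tensor (C : Type) (p n : nat) := 'I_n -> {ffun 'I_p.-1 -> 'I_n} -> C.

Section Tensors.
Variable C : numClosedFieldType.

Definition trow {p n : nat} (T : tensor C p n) (i : 'I_n) : C :=
  \sum_(a : {ffun 'I_p.-1 -> 'I_n}) `|T i a|.

Definition tRmax {p n : nat} (T : tensor C p n) : C :=
  \big[Num.max/0]_(i < n) trow T i.

(* General product AB, of order (m-1)(k-1)+1.  Its tail index
   beta : 'I_((m-1)(k-1)) -> 'I_n is split into the m-1 blocks
   alpha_j (j < m-1), alpha_j l = beta (mxvec_index j l), each of length k-1. *)
Definition tprod {m k n : nat} (A : tensor C m n) (B : tensor C k n)
  : tensor C (m.-1 * k.-1).+1 n :=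
  fun i beta =>
    \sum_(g : {ffun 'I_m.-1 -> 'I_n})
       A i g * \prod_(j < m.-1) B (g j) [ffun l => beta (mxvec_index j l)].

Definition teigenvalue {p n : nat} (T : tensor C p n) (lambda : C) : Prop :=
  exists x : {ffun 'I_n -> C}, x != 0 /\
    forall i : 'I_n,
      \sum_(a : {ffun 'I_p.-1 -> 'I_n}) T i a * \prod_(j < p.-1) x (a j)
      = lambda * x i ^+ p.-1.

End Tensors.

(* Geršgorin's argument for tensors: evaluate the eigen-equation at an index
   i where |x_i| is maximal; dividing by |x_i|^(p-1) bounds |lambda - t_{i..i}|
   by the off-diagonal row sum r_i(T) - |t_{i..i}|.  For T = AB, the row sum
   r_i(AB) is at most r_i(A) R(B)^(m-1), because splitting the tail index of AB
   into its m-1 blocks turns the sum over it into a product of row sums of B. *)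

From HB Require Import structures.
From mathcomp Require Import all_boot all_order all_algebra.
Import Order.TTheory GRing.Theory Num.Theory.
Local Open Scope ring_scope.

Section RealBigmax.
Context {R : numDomainType} {I : eqType} {F : I -> R}.
Hypothesis F_real : forall i, F i \is Num.real.

Lemma le_bigmax_real (x0 : R) (s : seq I) j :
  x0 \is Num.real -> j \in s -> F j <= \big[Num.max/x0]_(i <- s) F i.
Proof.
move=> x0_real; elim: s => // a s IHs; rewrite inE big_cons.
have cmp : F a >=< \big[Num.max/x0]_(i <- s) F i.
  by apply: real_comparable; rewrite ?F_real ?bigmax_real.
by case/orP=> [/eqP->|js]; rewrite comparable_le_max ?lexx ?IHs ?orbT.
Qed.

Lemma exists_argmax_real (s : seq I) (i0 : I) :
  i0 \in s -> exists2 i, i \in s & forall j, j \in s -> F j <= F i.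
Proof.
move=> s_i0.
have [i s_i Mi] : exists2 i, i \in s & \big[Num.max/F i0]_(j <- s) F j = F i.
  rewrite big_seq; apply: (big_ind (fun M => exists2 i, i \in s & M = F i)).
  - by exists i0.
  - move=> _ _ [a sa ->] [b sb ->]; rewrite /Num.max /Order.max.
    by case: ifP; [exists b | exists a].
  - by move=> j sj; exists j.
by exists i => // j sj; rewrite -Mi le_bigmax_real.
Qed.

End RealBigmax.

Definition tail_blocks {p q n : nat} (beta : {ffun 'I_(p * q) -> 'I_n})
  : {ffun 'I_p -> {ffun 'I_q -> 'I_n}} :=
  [ffun j => [ffun l => beta (mxvec_index j l)]].

Lemma tail_blocks_bij p q n : bijective (@tail_blocks p q n).
Proof.
exists (fun f : {ffun 'I_p -> {ffun 'I_q -> 'I_n}} =>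
  [ffun t => mxvec (\matrix_(j, l) f j l) 0 t]).
  move=> beta; apply/ffunP => t; rewrite ffunE.
  have -> : \matrix_(j, l) tail_blocks beta j l = vec_mx (\row_t beta t).
    by apply/matrixP => j l; rewrite !mxE !ffunE.
  by rewrite vec_mxK mxE.
by move=> f; apply/ffunP => j; apply/ffunP => l; rewrite !ffunE mxvecE mxE.
Qed.

Lemma sum_prod_tail_blocks {R : comNzSemiRingType} {p q n : nat}
    (G : 'I_p -> {ffun 'I_q -> 'I_n} -> R) :
  \sum_(beta : {ffun 'I_(p * q) -> 'I_n})
     \prod_(j < p) G j [ffun l => beta (mxvec_index j l)]
    = \prod_(j < p) \sum_(a : {ffun 'I_q -> 'I_n}) G j a.
Proof.
rewrite bigA_distr_bigA (reindex _ (onW_bij _ (@tail_blocks_bij p q n))).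
by apply: eq_bigr => beta _; apply: eq_bigr => j _; rewrite ffunE.
Qed.

Section TensorBounds.
Variable C : numClosedFieldType.

Lemma trow_ge0 p n (T : tensor C p n) i : 0 <= trow T i.
Proof. by apply: sumr_ge0 => a _; apply: normr_ge0. Qed.

Lemma trow_le_tRmax p n (T : tensor C p n) i : trow T i <= tRmax T.
Proof.
apply: le_bigmax_real; rewrite ?mem_index_enum // => j.
by rewrite ger0_real ?trow_ge0.
Qed.

Lemma trow_tprod_le m k n (A : tensor C m n) (B : tensor C k n) i :
  trow (tprod A B) i <= trow A i * tRmax B ^+ m.-1.
Proof.
rewrite /trow /tprod.
apply: le_trans (ler_sum _ (fun beta _ => ler_norm_sum _ _ _)) _.
rewrite exchange_big mulr_suml; apply: ler_sum => g _ /=.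
under eq_bigr do rewrite normrM normr_prod.
rewrite -mulr_sumr ler_wpM2l //.
rewrite (sum_prod_tail_blocks (fun j a => `|B (g j) a|)).
rewrite -[X in _ <= _ ^+ X](card_ord m.-1) -prodr_const.
by apply: ler_prod => j _; rewrite trow_ge0 trow_le_tRmax.
Qed.

Lemma teigenvalue_gershgorin p n (T : tensor C p n) lambda :
  teigenvalue T lambda ->
  exists i, `|lambda - T i [ffun => i]| <= trow T i - `|T i [ffun => i]|.
Proof.
case=> x [x_neq0 eig].
have [j0 xj0_neq0] : exists j, x j != 0.
  apply/existsP; apply: contraR x_neq0 => /existsPn x0.
  by apply/eqP/ffunP => j; rewrite ffunE; apply/eqP/negbNE.
have [i _ /(_ _ (mem_index_enum _)) x_max] :=
  exists_argmax_real (fun j => normr_real (x j)) _ _ (mem_index_enum j0).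
exists i; set d : {ffun 'I_p.-1 -> 'I_n} := [ffun => i].
have xi_gt0 : 0 < `|x i| by rewrite (lt_le_trans _ (x_max j0)) ?normr_gt0.
have prod_le a : `|\prod_(j < p.-1) x (a j)| <= `|x i| ^+ p.-1.
  rewrite normr_prod -[X in _ <= _ ^+ X](card_ord p.-1) -prodr_const.
  by apply: ler_prod => j _; rewrite normr_ge0 x_max.
have off_diag : (lambda - T i d) * x i ^+ p.-1
    = \sum_(a | a != d) T i a * \prod_(j < p.-1) x (a j).
  have diag_prod : \prod_(j < p.-1) x (d j) = x i ^+ p.-1.
    by under eq_bigr do rewrite ffunE; rewrite prodr_const card_ord.
  by rewrite mulrBl -eig (bigD1 d) //= diag_prod addrAC subrr add0r.
rewrite lerBrDr addrC [trow T i](bigD1 d) //= lerD2l.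
rewrite -(ler_pM2r (exprn_gt0 p.-1 xi_gt0)) -normrX -normrM off_diag.
apply: le_trans (ler_norm_sum _ _ _) _; rewrite mulr_suml.
by apply: ler_sum => a _; rewrite normrM normrX ler_wpM2l.
Qed.

End TensorBounds.

Theorem theorem4p3 (C : numClosedFieldType) (m k n : nat)
  (hm : (2 <= m)%N) (hk : (2 <= k)%N) (hn : (1 <= n)%N)
  (A : tensor C m n) (B : tensor C k n) (lambda : C) :
  teigenvalue (tprod A B) lambda ->
  exists i : 'I_n,
    `|lambda - tprod A B i [ffun => i]|
      <= trow A i * tRmax B ^+ m.-1 - `|tprod A B i [ffun => i]|.
Proof.
move=> /teigenvalue_gershgorin [i gershgorin_i]; exists i.
by apply: le_trans gershgorin_i _; rewrite lerD2r trow_tprod_le.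
Qed.
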